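(* Let $m \geq 2$ be an integer and $n = m^2$. For $k = 0,1,\ldots,m-1$ let $u_k = e^{i 2 k \pi/m}$. For $\mathbf{t} = (t_0,t_1,\ldots,t_{m-2}) \in (\mathbb{C}\setminus\{0\})^{m-1}$ define the point $\mathbf{x}(\mathbf{t}) = (x_0,\ldots,x_{n-1}) \in \mathbb{C}^n$ by \[ x_{km+j} = u_k\, t_0 t_1 \cdots t_j \quad (j = 0,1,\ldots,m-2), \qquad x_{km+m-1} = u_k\, t_0^{-m+1} t_1^{-m+2} \cdots t_{m-3}^{-2} t_{m-2}^{-1}, \] for $k = 0,1,\ldots,m-1$ (so the exponent of $t_j$ in $x_{km+m-1}$ is $-(m-1-j)$). Then every point $\mathbf{x}(\mathbf{t})$, $\mathbf{t} \in (\mathbb{C}\setminus\{0\})^{m-1}$, is a cyclic $n$-root, and the set $\{\mathbf{x}(\mathbf{t}) : \mathbf{t} \in (\mathbb{C}\setminus\{0\})^{m-1}\}$ is an $(m-1)$-dimensional set of cyclic $n$-roots.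
   Context: For a positive integer $n$, the cyclic $n$-roots system in the variables $x_0,\ldots,x_{n-1}$ consists of the $n$ equations \[ \sum_{j=0}^{n-1} \prod_{k=j}^{j+i-1} x_{k \bmod n} = 0 \quad (i = 1,2,\ldots,n-1), \qquad x_0 x_1 \cdots x_{n-1} - 1 = 0. \] (For $i=1$ this is $x_0+\cdots+x_{n-1}=0$, for $i=2$ it is $x_0x_1+x_1x_2+\cdots+x_{n-2}x_{n-1}+x_{n-1}x_0=0$.) A cyclic $n$-root is a point of $\mathbb{C}^n$ satisfying all these equations. *)

From mathcomp Require Import all_boot all_algebra complex.
From mathcomp Require Import all_classical all_reals all_analysis.
Set Implicit Arguments. Unset Strict Implicit. Unset Printing Implicit Defensive.
Import GRing.Theory Num.Theory.
Local Open Scope ring_scope.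

(* A point of C^n is represented by x : nat -> R[i]; only x 0, ..., x (n-1) matter. *)
Definition cyclic_root (R : realType) (n : nat) (x : nat -> R[i]) : Prop :=
  (forall i : nat, (1 <= i < n)%N ->
     \sum_(j < n) \prod_(l < i) x ((j + l) %% n)%N = 0)
  /\ \prod_(j < n) x j = 1.

Definition uroot (R : realType) (m k : nat) : R[i] :=
  (cos (2 * k%:R * pi / m%:R) +i* sin (2 * k%:R * pi / m%:R))%C.

Definition xpt (R : realType) (m : nat) (t : nat -> R[i]) (p : nat) : R[i] :=
  let k := (p %/ m)%N in
  let j := (p %% m)%N in
  if (j < m.-1)%N then uroot R m k * \prod_(i < j.+1) t i
  else uroot R m k * \prod_(i < m.-1) (t i) ^- (m.-1 - i)%N.

From mathcomp Require Import all_boot all_algebra complex.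
From mathcomp Require Import all_classical all_reals all_analysis.
From mathcomp Require Import ring lra.
Set Implicit Arguments. Unset Strict Implicit. Unset Printing Implicit Defensive.
Import GRing.Theory Num.Theory.
Local Open Scope ring_scope.

(* The point x(t) is quasi-periodic: x_(p+m) = w x_p with w = u_1 a primitive
   m-th root of unity, and the product of its first m coordinates is 1.  Hence
   any window of m consecutive coordinates has product w^q, a window of length
   i is multiplied by w^i when shifted by m, and the i-th cyclic sum over
   n = m^2 positions collapses to a geometric sum of a non-trivial root of
   unity: of w^i (grouping positions by their residue mod m) when m does not
   divide i, and of w^(i/m) otherwise.  Injectivity holds because the first
   m-1 coordinates are the prefix products of t. *)

Lemma big_ord_blocks (T : Type) (idx : T) (op : Monoid.law idx) (F : nat -> T) K m :
  \big[op/idx]_(j < K * m) F j =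
  \big[op/idx]_(k < K) \big[op/idx]_(r < m) F (k * m + r)%N.
Proof.
elim: K => [|K IH]; first by rewrite mul0n !big_ord0.
by rewrite big_ord_recr /= -IH mulSnr big_split_ord.
Qed.

Lemma sum_expr_unity_root_eq0 (F : idomainType) (z : F) N :
  z ^+ N = 1 -> z != 1 -> \sum_(k < N) z ^+ k = 0.
Proof.
move=> zN z1; have := subrX1 z N; rewrite zN subrr => /esym /eqP.
by rewrite mulf_eq0 subr_eq0 (negbTE z1) => /eqP.
Qed.

Lemma prod_prefix_prods (R : comRingType) (t : nat -> R) M :
  \prod_(b < M) \prod_(i < b.+1) t i = \prod_(i < M) t i ^+ (M - i).
Proof.
elim: M => [|M IH]; first by rewrite !big_ord0.
rewrite big_ord_recr /= IH !big_ord_recr /= subSnn expr1 mulrA -big_split /=.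
congr (_ * _); apply: eq_bigr => i _.
by rewrite subSn ?exprSr // ltnW.
Qed.

Lemma prefix_prods_inj (F : idomainType) (t t' : nat -> F) M :
  (forall j, (j < M)%N -> t j != 0) ->
  (forall j, (j < M)%N -> \prod_(i < j.+1) t i = \prod_(i < j.+1) t' i) ->
  forall j, (j < M)%N -> t j = t' j.
Proof.
move=> t_neq0 eq_prefix; elim/ltn_ind => j IH ltjM.
have ltiM (i : 'I_j) : (i < M)%N by apply: ltn_trans ltjM.
have eq_head : \prod_(i < j) t i = \prod_(i < j) t' i.
  by apply: eq_bigr => i _; apply: IH.
have := eq_prefix j ltjM; rewrite !big_ord_recr /= -eq_head.
by apply: mulfI; apply/prodf_neq0 => i _; apply: t_neq0.
Qed.

Section QuasiPeriodic.

Variables (F : idomainType) (m : nat) (w : F) (x : nat -> F).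
Hypothesis w_prim : m.-primitive_root w.
Hypothesis xDm : forall p, x (p + m)%N = w * x p.

Let m_gt0 : (0 < m)%N := prim_order_gt0 w_prim.

Let expr_mul_order k : w ^+ (k * m) = 1.
Proof. by rewrite mulnC exprM (prim_expr_order w_prim) expr1n. Qed.

Lemma quasi_periodicDM k p : x (p + k * m)%N = w ^+ k * x p.
Proof.
elim: k => [|k IH]; first by rewrite mul0n addn0 expr0 mul1r.
by rewrite mulSnr addnA xDm IH exprS mulrA.
Qed.

Lemma quasi_periodic_mod p : x (p %% (m * m))%N = x p.
Proof.
by rewrite [in RHS](divn_eq p (m * m)) addnC mulnA quasi_periodicDM expr_mul_order mul1r.
Qed.

Lemma prod_window_order q : \prod_(b < m) x (q + b)%N = w ^+ q * \prod_(b < m) x b.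
Proof.
elim: q => [|q IH].
  by rewrite expr0 mul1r; apply: eq_bigr => b _; rewrite add0n.
case: m m_gt0 xDm IH => // m' _ xDm' IH.
rewrite big_ord_recr /= addSnnS xDm' exprS -mulrA -IH big_ord_recl addn0.
under [in RHS]eq_bigr => b _ do rewrite lift0 -addSnnS.
by rewrite mulrC mulrA.
Qed.

Lemma prod_quasi_period : \prod_(j < m * m) x j = (\prod_(b < m) x b) ^+ m.
Proof.
rewrite big_ord_blocks (eq_bigr (fun=> \prod_(b < m) x b)) ?prodr_const ?card_ord // => k _.
by rewrite prod_window_order expr_mul_order mul1r.
Qed.

Lemma prod_window_shiftM i k p :
  \prod_(l < i) x (k * m + p + l)%N = (w ^+ i) ^+ k * \prod_(l < i) x (p + l)%N.
Proof.
rewrite -exprM [(i * k)%N]mulnC exprM -[X in _ ^+ X](card_ord i) -prodr_const -big_split /=.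
by apply: eq_bigr => l _; rewrite -quasi_periodicDM -addnA addnC.
Qed.

Lemma sum_windows_eq0_ndvd i :
  ~~ (m %| i)%N -> \sum_(j < m * m) \prod_(l < i) x (j + l)%N = 0.
Proof.
move=> m_ndvd_i; rewrite (big_ord_blocks _ (fun j => \prod_(l < i) x (j + l)%N)).
under eq_bigr => k _ do under eq_bigr => r _ do rewrite prod_window_shiftM.
under eq_bigr => k _ do rewrite -mulr_sumr.
rewrite -mulr_suml sum_expr_unity_root_eq0 ?mul0r //.
  by rewrite exprAC (prim_expr_order w_prim) expr1n.
by rewrite -(prim_order_dvd w_prim).
Qed.

(* A window of length s m is s consecutive windows of length m. *)
Lemma sum_windows_eq0_dvd s :
  (0 < s < m)%N -> \sum_(j < m * m) \prod_(l < s * m) x (j + l)%N = 0.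
Proof.
case/andP=> s_gt0 lt_sm.
have window j :
    \prod_(l < s * m) x (j + l)%N = (w ^+ s) ^+ j * (\prod_(b < m) x b) ^+ s.
  rewrite (big_ord_blocks _ (fun l => x (j + l)%N)) -exprM mulnC exprM -exprMn.
  rewrite (eq_bigr (fun=> w ^+ j * \prod_(b < m) x b)) ?prodr_const ?card_ord // => a _.
  under eq_bigr => r _ do rewrite addnA.
  by rewrite prod_window_order exprD expr_mul_order mulr1.
under eq_bigr => j _ do rewrite window.
rewrite -mulr_suml sum_expr_unity_root_eq0 ?mul0r //.
  by rewrite -exprM mulnA expr_mul_order.
rewrite -(prim_order_dvd w_prim); apply/negP => /(dvdn_leq s_gt0).
by rewrite leqNgt lt_sm.
Qed.

Lemma cyclic_sums_eq0 i : (0 < i < m * m)%N ->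
  \sum_(j < m * m) \prod_(l < i) x ((j + l) %% (m * m))%N = 0.
Proof.
case/andP=> i_gt0 lt_i_mm.
under eq_bigr => j _ do under eq_bigr => l _ do rewrite quasi_periodic_mod.
have [/dvdnP [s def_i]|] := boolP (m %| i)%N; last exact: sum_windows_eq0_ndvd.
rewrite def_i; apply: sum_windows_eq0_dvd; move: i_gt0 lt_i_mm.
by rewrite def_i muln_gt0 ltn_pmul2r // => /andP [-> _] ->.
Qed.

End QuasiPeriodic.

Section UnitRoot.

Variables (R : realType) (m : nat).

Lemma urootD a b : uroot R m (a + b) = uroot R m a * uroot R m b.
Proof.
rewrite /uroot natrD.
have -> : 2 * (a%:R + b%:R) * pi / m%:R =
    2 * a%:R * pi / m%:R + 2 * b%:R * pi / (m%:R : R) by ring.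
rewrite cosD sinD [RHS]/GRing.mul /=.
by congr (_ +i* _)%C; ring.
Qed.

Lemma urootE k : uroot R m k = uroot R m 1 ^+ k.
Proof.
elim: k => [|k IH]; first by rewrite /uroot !mulr0 !mul0r cos0 sin0.
by rewrite -addn1 urootD IH exprD expr1.
Qed.

Hypothesis m_gt0 : (0 < m)%N.

Let m_neq0 : m%:R != 0 :> R.
Proof. by rewrite pnatr_eq0 -lt0n. Qed.

Lemma uroot_order : uroot R m m = 1.
Proof.
rewrite /uroot (_ : 2 * m%:R * pi / m%:R = pi *+ 2); last first.
  by rewrite -mulr_natr; field.
by rewrite sin2pi cos_mulr2n cospi sqrrN expr1n (_ : 2 - 1 = 1 :> R) //; ring.
Qed.

(* Re u_r = cos(2a) = 1 - 2 sin(a)^2 with a = r pi / m in (0, pi), so sin a > 0. *)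
Lemma uroot_neq1 r : (0 < r < m)%N -> uroot R m r != 1.
Proof.
case/andP => r_gt0 lt_rm; apply/negP => /eqP /(congr1 (@complex.Re R)) /=.
have m_pos : 0 < m%:R :> R by rewrite ltr0n.
set a := r%:R * pi / m%:R : R.
have -> : 2 * r%:R * pi / m%:R = a *+ 2 :> R by rewrite /a -mulr_natr; field.
have sin_pos : 0 < sin a.
  apply: sin_gt0_pi; apply/andP; split.
    by rewrite /a divr_gt0 // ?mulr_gt0 ?ltr0n ?pi_gt0.
  by rewrite /a ltr_pdivrMr // mulrC ltr_pM2l ?pi_gt0 // ltr_nat.
rewrite cos_mulr2n; have := cos2Dsin2 a; nra.
Qed.

Lemma uroot_prim : m.-primitive_root (uroot R m 1).
Proof.
apply/andP; split=> //; apply/forallP => i; rewrite unity_rootE -urootE.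
have [-> | ne_im] := eqVneq i.+1 m; first by rewrite uroot_order eqxx.
have lt_im : (0 < i.+1 < m)%N by rewrite /= ltn_neqAle ne_im ltn_ord.
by rewrite (negbTE (uroot_neq1 lt_im)).
Qed.

End UnitRoot.

Section CyclicPoint.

Variables (R : realType) (m : nat) (t : nat -> R[i]).
Hypothesis m_gt0 : (0 < m)%N.

Lemma xptDm p : xpt m t (p + m) = uroot R m 1 * xpt m t p.
Proof.
rewrite /xpt divnDr ?dvdnn // divnn m_gt0 modnDr urootD.
by case: ifP; rewrite mulrA [uroot R m 1 * _]mulrC.
Qed.

Lemma xpt_prefix j : (j < m.-1)%N -> xpt m t j = \prod_(i < j.+1) t i.
Proof.
move=> lt_j; have lt_jm : (j < m)%N by apply: leq_trans lt_j (leq_pred m).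
by rewrite /xpt divn_small // modn_small // lt_j urootE expr0 mul1r.
Qed.

Lemma prod_xpt_period :
  (forall j, (j < m.-1)%N -> t j != 0) -> \prod_(j < m) xpt m t j = 1.
Proof.
move=> t_neq0; have lt_pred_m : (m.-1 < m)%N by rewrite ltn_predL.
rewrite -(big_mkord xpredT) -[m in index_iota _ m](prednK m_gt0) big_nat_recr //= big_mkord.
under eq_bigr => j _ do rewrite xpt_prefix //.
rewrite prod_prefix_prods /xpt divn_small // modn_small // ltnn urootE expr0 mul1r.
by rewrite -big_split /=; apply: big1 => i _; rewrite mulfV // expf_neq0 // t_neq0.
Qed.

End CyclicPoint.

Theorem proposition2 (R : realType) (m : nat) (hm : (2 <= m)%N) :
  (forall t : nat -> R[i], (forall j, (j < m.-1)%N -> t j != 0) ->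
     cyclic_root (m ^ 2)%N (xpt m t))
  /\
  (forall t t' : nat -> R[i],
     (forall j, (j < m.-1)%N -> t j != 0) ->
     (forall j, (j < m.-1)%N -> t' j != 0) ->
     (forall p, (p < m ^ 2)%N -> xpt m t p = xpt m t' p) ->
     forall j, (j < m.-1)%N -> t j = t' j).
Proof.
have m_gt0 : (0 < m)%N by apply: leq_trans hm.
have w_prim := uroot_prim R m_gt0.
split=> [t t_neq0 | t t' t_neq0 _ eq_x].
  have xDm := xptDm t m_gt0.
  rewrite /cyclic_root -mulnn; split => [i|].
    exact: cyclic_sums_eq0 w_prim xDm i.
  by rewrite (prod_quasi_period w_prim xDm) prod_xpt_period // expr1n.
apply: (prefix_prods_inj t_neq0) => j lt_j.
rewrite -(xpt_prefix t lt_j) -(xpt_prefix t' lt_j); apply: eq_x.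
rewrite (leq_trans lt_j) // (leq_trans (leq_pred m)) // expnS expn1 leq_pmulr //.
Qed.
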